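(* Consider the symmetric two-cell load coupling model described in the context, and let $\bm{\kappa}=(\kappa_1,\dots,\kappa_{2m})\in\{0,1\}^{2m}$ be a JT pattern such that $\kappa_j=\kappa_{m+j}$ for all $j\in\{1,\dots,m\}$. Suppose the coupled system for $\bm{\kappa}$ has a fixed point $(x_1,x_2)$ with $x_1,x_2>0$ (the load at convergence). Then the UE loads evaluated at this fixed point satisfy $y_j=y_{m+j}$ for every $j\in\{1,\dots,m\}$.
   Context: Two-cell model: there are two cells (cell 1 and cell 2) and $2m$ UEs indexed $1,\dots,2m$; UEs $1,\dots,m$ are (originally) served by cell 1 and UEs $m+1,\dots,2m$ by cell 2. Transmit powers per resource block satisfy $p_1=p_2=p>0$; channel gains $g_{ij}>0$ satisfy $g_{1,j}=g_{2,m+j}$ and $g_{1,m+j}=g_{2,j}$ for all $j\in\{1,\dots,m\}$; user demands satisfy $d_j=d_{m+j}>0$; the noise power is $\sigma^2>0$. For each UE $j$ define the constant $c_j=\dfrac{d_j}{\log_2\left(1+\frac{p_1g_{1j}+p_2g_{2j}}{\sigma^2}\right)}$. A JT pattern is $\bm{\kappa}\in\{0,1\}^{2m}$, where $\kappa_j=1$ means UE $j$ is served jointly by both cells. Given $\bm\kappa$ and loads $x_1,x_2$, the UE loads are $y_j=\dfrac{(1-\kappa_j)d_j}{\log_2\left(1+\frac{p_1g_{1j}}{p_2g_{2j}x_2+\sigma^2}\right)}+c_j\kappa_j$ for $j\in\{1,\dots,m\}$ and $y_j=\dfrac{(1-\kappa_j)d_j}{\log_2\left(1+\frac{p_2g_{2j}}{p_1g_{1j}x_1+\sigma^2}\right)}+c_j\kappa_j$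 for $j\in\{m+1,\dots,2m\}$, and the cell loads are coupled via $x_1=\sum_{j=1}^m y_j$, $x_2=\sum_{j=m+1}^{2m}y_j$. The load at convergence for $\bm\kappa$ is a solution $(x_1,x_2)$ of this coupled system (unique when it exists). *)

From Stdlib Require Import Reals Lra Lia.
Open Scope R_scope.

Definition log2 (x : R) : R := ln x / ln 2.

(* UEs are indexed by 1..2m (nat); g1 j = g_{1j}, g2 j = g_{2j};
   kappa j : bool (true = JT). *)

Definition cJT (p1 p2 sigma2 : R) (g1 g2 d : nat -> R) (j : nat) : R :=
  d j / log2 (1 + (p1 * g1 j + p2 * g2 j) / sigma2).

Definition yload (m : nat) (p1 p2 sigma2 : R) (g1 g2 d : nat -> R)
  (kappa : nat -> bool) (x1 x2 : R) (j : nat) : R :=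
  let k := if kappa j then 1 else 0 in
  if (j <=? m)%nat then
    (1 - k) * d j / log2 (1 + p1 * g1 j / (p2 * g2 j * x2 + sigma2))
    + cJT p1 p2 sigma2 g1 g2 d j * k
  else
    (1 - k) * d j / log2 (1 + p2 * g2 j / (p1 * g1 j * x1 + sigma2))
    + cJT p1 p2 sigma2 g1 g2 d j * k.

Fixpoint sumR (f : nat -> R) (a n : nat) : R :=
  match n with
  | O => 0
  | S n' => sumR f a n' + f (a + n')%nat
  end.
(* sumR f a n = f a + ... + f (a+n-1) *)

Definition is_fixed_point (m : nat) (p1 p2 sigma2 : R) (g1 g2 d : nat -> R)
  (kappa : nat -> bool) (x1 x2 : R) : Prop :=
  x1 = sumR (yload m p1 p2 sigma2 g1 g2 d kappa x1 x2) 1 m /\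
  x2 = sumR (yload m p1 p2 sigma2 g1 g2 d kappa x1 x2) (m + 1) m.

(* By the symmetry of gains, demands and JT pattern, UE m+j sees from cell 1's
   load exactly the interference that UE j sees from cell 2's load, so both cell
   loads are given by one function H: x1 = H x2 and x2 = H x1.  H is
   nondecreasing, since more interference lowers the rate; hence x1 < x2 would
   give x2 = H x1 <= H x2 = x1, and symmetrically, so x1 = x2 and the UE loads
   of j and m+j coincide. *)
From Stdlib Require Import Reals Lra Lia.
Open Scope R_scope.

Lemma log2_lt (x y : R) : 0 < x -> x < y -> log2 x < log2 y.
Proof.
  intros Hx Hxy; unfold log2, Rdiv.
  assert (Hln2 : 0 < ln 2) by (rewrite <- ln_1; apply ln_increasing; lra).
  apply Rmult_lt_compat_r; [now apply Rinv_0_lt_compat | now apply ln_increasing].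
Qed.

Lemma log2_gt0 (x : R) : 1 < x -> 0 < log2 x.
Proof.
  intros Hx; replace 0 with (log2 1) by (unfold log2; rewrite ln_1; lra).
  apply log2_lt; lra.
Qed.

Lemma Rdiv_log2_le (d u u' : R) :
  0 <= d -> 1 < u' -> u' <= u -> d / log2 u <= d / log2 u'.
Proof.
  intros Hd Hu' Hle.
  assert (H' := log2_gt0 u' Hu').
  assert (Hlog : log2 u' <= log2 u).
  { destruct (Rle_lt_or_eq_dec _ _ Hle) as [Hlt | ->]; [left; apply log2_lt|]; lra. }
  unfold Rdiv; apply Rmult_le_compat_l; [lra|].
  now apply Rinv_le_contravar.
Qed.

Lemma rate_load_le_interference (a b s d x x' : R) :
  0 < a -> 0 < b -> 0 < s -> 0 <= d -> 0 < x -> x <= x' ->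
  d / log2 (1 + a / (b * x + s)) <= d / log2 (1 + a / (b * x' + s)).
Proof.
  intros Ha Hb Hs Hd Hx Hxx'.
  apply Rdiv_log2_le; [exact Hd | |].
  - assert (0 < a / (b * x' + s)) by (apply Rdiv_lt_0_compat; nra); lra.
  - apply Rplus_le_compat_l; unfold Rdiv; apply Rmult_le_compat_l; [lra|].
    apply Rinv_le_contravar; nra.
Qed.

Lemma sumR_ext (f g : nat -> R) (a b n : nat) :
  (forall i, (i < n)%nat -> f (a + i)%nat = g (b + i)%nat) ->
  sumR f a n = sumR g b n.
Proof.
  induction n as [|n IH]; intros Hfg; simpl; [reflexivity|].
  rewrite IH, Hfg; [reflexivity | lia | intros; apply Hfg; lia].
Qed.

Lemma sumR_le (f g : nat -> R) (a n : nat) :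
  (forall i, (i < n)%nat -> f (a + i)%nat <= g (a + i)%nat) ->
  sumR f a n <= sumR g a n.
Proof.
  induction n as [|n IH]; intros Hfg; simpl; [lra|].
  apply Rplus_le_compat; [apply IH; intros; apply Hfg; lia | apply Hfg; lia].
Qed.

Lemma swapped_fixed_point_eq (H : R -> R) (x1 x2 : R) :
  (forall x x', 0 < x -> x <= x' -> H x <= H x') ->
  0 < x1 -> 0 < x2 -> x1 = H x2 -> x2 = H x1 -> x1 = x2.
Proof.
  intros Hmono Hx1 Hx2 E1 E2.
  destruct (Rtotal_order x1 x2) as [Hlt | [Heq | Hlt]]; [| exact Heq |].
  - pose proof (Hmono x1 x2 Hx1 (Rlt_le _ _ Hlt)); lra.
  - pose proof (Hmono x2 x1 Hx2 (Rlt_le _ _ Hlt)); lra.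
Qed.

Section SymmetricCells.

Variables (m : nat) (p sigma2 : R) (g1 g2 d : nat -> R) (kappa : nat -> bool).

Definition jt (j : nat) : R := if kappa j then 1 else 0.

Definition ue_load (j : nat) (x : R) : R :=
  (1 - jt j) * d j / log2 (1 + p * g1 j / (p * g2 j * x + sigma2))
  + cJT p p sigma2 g1 g2 d j * jt j.

Definition cell_load (x : R) : R := sumR (fun j => ue_load j x) 1 m.

Hypothesis gain_sym :
  forall j, (1 <= j <= m)%nat -> g1 j = g2 (m + j)%nat /\ g1 (m + j)%nat = g2 j.
Hypothesis demand_sym : forall j, (1 <= j <= m)%nat -> d j = d (m + j)%nat.
Hypothesis kappa_sym : forall j, (1 <= j <= m)%nat -> kappa j = kappa (m + j)%nat.

Lemma yload_cell1 (x1 x2 : R) (j : nat) : (1 <= j <= m)%nat ->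
  yload m p p sigma2 g1 g2 d kappa x1 x2 j = ue_load j x2.
Proof.
  intros Hj; unfold yload, ue_load, jt.
  now replace (j <=? m)%nat with true by (symmetry; apply Nat.leb_le; lia).
Qed.

Lemma yload_cell2 (x1 x2 : R) (j : nat) : (1 <= j <= m)%nat ->
  yload m p p sigma2 g1 g2 d kappa x1 x2 (m + j) = ue_load j x1.
Proof.
  intros Hj; destruct (gain_sym j Hj) as [S1 S2].
  unfold yload, ue_load, jt, cJT.
  replace (m + j <=? m)%nat with false by (symmetry; apply Nat.leb_gt; lia).
  rewrite <- kappa_sym, <- demand_sym, <- S1, <- S2 by exact Hj.
  now rewrite (Rplus_comm (p * g1 (m + j)%nat)).
Qed.

Lemma cell_load_le (x x' : R) :
  0 < p -> 0 < sigma2 ->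
  (forall j, (1 <= j <= m)%nat -> 0 < g1 j /\ 0 < g2 j /\ 0 < d j) ->
  0 < x -> x <= x' -> cell_load x <= cell_load x'.
Proof.
  intros Hp Hs Hpos Hx Hxx'; apply sumR_le; intros i Hi.
  destruct (Hpos (1 + i)%nat ltac:(lia)) as (Hg1 & Hg2 & Hd).
  unfold ue_load, jt; destruct (kappa (1 + i)%nat).
  - rewrite Rminus_diag, !Rmult_0_l, !Rdiv_0_l; lra.
  - rewrite Rminus_0_r, !Rmult_1_l.
    apply Rplus_le_compat_r, rate_load_le_interference; nra.
Qed.

End SymmetricCells.

Theorem lemma1 (m : nat) (p1 p2 p sigma2 : R) (g1 g2 d : nat -> R)
  (kappa : nat -> bool) (x1 x2 : R) :
  p > 0 -> p1 = p -> p2 = p -> sigma2 > 0 ->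
  (forall j, (1 <= j <= 2 * m)%nat -> g1 j > 0 /\ g2 j > 0) ->
  (forall j, (1 <= j <= m)%nat -> g1 j = g2 (m + j)%nat /\ g1 (m + j)%nat = g2 j) ->
  (forall j, (1 <= j <= m)%nat -> d j = d (m + j)%nat /\ d j > 0) ->
  (forall j, (1 <= j <= m)%nat -> kappa j = kappa (m + j)%nat) ->
  x1 > 0 -> x2 > 0 ->
  is_fixed_point m p1 p2 sigma2 g1 g2 d kappa x1 x2 ->
  forall j, (1 <= j <= m)%nat ->
    yload m p1 p2 sigma2 g1 g2 d kappa x1 x2 j =
    yload m p1 p2 sigma2 g1 g2 d kappa x1 x2 (m + j)%nat.
Proof.
  intros Hp -> -> Hs Hg Hsym Hd Hk Hx1 Hx2 [F1 F2] j Hj.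
  assert (Hdsym : forall i, (1 <= i <= m)%nat -> d i = d (m + i)%nat)
    by (intros i Hi; apply Hd, Hi).
  set (H := cell_load m p sigma2 g1 g2 d kappa).
  assert (E1 : x1 = H x2).
  { rewrite F1; apply sumR_ext; intros i Hi.
    apply yload_cell1; lia. }
  assert (E2 : x2 = H x1).
  { rewrite F2; apply sumR_ext; intros i Hi.
    replace (m + 1 + i)%nat with (m + (1 + i))%nat by lia.
    apply (yload_cell2 m p sigma2 g1 g2 d kappa Hsym Hdsym Hk); lia. }
  assert (Heq : x1 = x2).
  { apply (swapped_fixed_point_eq H); auto.
    intros x x' Hx Hxx'; apply cell_load_le; auto.
    intros i Hi; destruct (Hg i ltac:(lia)); destruct (Hd i Hi); lra. }
  rewrite yload_cell1, (yload_cell2 m p sigma2 g1 g2 d kappa Hsym Hdsym Hk), Heq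
    by exact Hj.
  reflexivity.
Qed.
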